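(* Suppose $(\varepsilon,\beta,\gamma;(12))\in\mathrm{Par}(n)$. Fix an integer $d>1$, and let $r$ be the number of cycles of $\beta$ of length $d$; suppose $r$ is odd. Let $\Gamma$ be the set of all cycles $C$ of $\gamma$ (including fixed points as cycles of length $1$) satisfying all of: <ul> <li>(i) $o(C)$ is an odd divisor of $d$;</li> <li>(ii) $\beta$ has no cycle $C'$ with $1<o(C')<d$ and $\operatorname{lcm}(o(C),o(C'))=d$;</li> <li>(iii) if the number of fixed points of $\beta$ is odd, then $o(C)<d$.</li> </ul> Then $\Gamma=\emptyset$ if $d$ is even, and $|\Gamma|\le r$ if $d$ is odd.
   Context: A Latin square of order $n$ is an $n\times n$ array with rows, columns and symbols indexed by $[n]$, each symbol occurring once in each row and each column, with triple set $O(L)$. Permutations act on the right; $\varepsilon$ is the identity. $o(C)$ is the length of a cycle $C$. A paratopism $(\alpha,\beta,\gamma;(12))$ maps $L$ to $L^\sigma$ with triple set $\{(y\beta,x\alpha,z\gamma):(x,y,z)\in O(L)\}$; it is an autoparatopism of $L$ if $L^\sigma=L$. $\mathrm{Par}(n)$ is the set of paratopisms that are autoparatopisms of at least one Latin square of order $n$. *)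

From mathcomp Require Import all_boot all_fingroup.
Set Implicit Arguments. Unset Strict Implicit. Unset Printing Implicit Defensive.

Definition latin_square (n : nat) (L : 'I_n -> 'I_n -> 'I_n) : Prop :=
  (forall x, injective (L x)) /\ (forall y, injective (fun x => L x y)).

Definition OL (n : nat) (L : 'I_n -> 'I_n -> 'I_n) : {set 'I_n * 'I_n * 'I_n} :=
  [set t | t.2 == L t.1.1 t.1.2].

(* Image of L under the paratopism (alpha,beta,gamma;(12)):
   {(y beta, x alpha, z gamma) : (x,y,z) in O(L)}.  Right action x alpha = alpha x. *)
Definition paratop12_image (n : nat) (alpha beta gamma : {perm 'I_n})
  (L : 'I_n -> 'I_n -> 'I_n) : {set 'I_n * 'I_n * 'I_n} :=
  [set ((beta t.1.2, alpha t.1.1), gamma t.2) | t in OL L].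

Definition autoparatopism12 (n : nat) (alpha beta gamma : {perm 'I_n})
  (L : 'I_n -> 'I_n -> 'I_n) : Prop :=
  paratop12_image alpha beta gamma L = OL L.

Definition in_Par12 (n : nat) (alpha beta gamma : {perm 'I_n}) : Prop :=
  exists L : 'I_n -> 'I_n -> 'I_n, latin_square L /\ autoparatopism12 alpha beta gamma L.

Definition cycles (n : nat) (s : {perm 'I_n}) : {set {set 'I_n}} := porbits s.

Definition num_cycles_len (n : nat) (s : {perm 'I_n}) (d : nat) : nat :=
  #|[set C in cycles s | #|C| == d]|.

Definition num_fixed (n : nat) (s : {perm 'I_n}) : nat := #|[set x | s x == x]|.

Definition Gamma_set (n : nat) (beta gamma : {perm 'I_n}) (d : nat) : {set {set 'I_n}} :=
  [set C in cycles gamma |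
    [&& odd #|C|, #|C| %| d,
        ~~ [exists C' in cycles beta, (1 < #|C'| < d) && (lcmn #|C| #|C'| == d)]
      & odd (num_fixed beta) ==> (#|C| < d)]].

From mathcomp Require Import all_boot all_fingroup zify.
Set Implicit Arguments. Unset Strict Implicit. Unset Printing Implicit Defensive.

(* Fix a cycle of gamma through z, of odd length c = 2k+1 dividing d, and let
   zcol x be the column of row x holding z.  The relation
   L(y beta, x) = L(x, y) gamma makes tau := zcol followed by beta^(k+1) a
   square root of beta^c commuting with beta^c.  On the set A of points whose
   beta-cycle length a has lcm(a, c) = d, every tau-orbit has length 2d/c
   unless it is fixed by tau^(d/c); conditions (ii), (iii) and the oddness of r
   make |A| not divisible by 2d/c, so such a fixed point exists.  For d even
   this is absurd; for d odd it yields w on a beta-cycle of length d with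
   L(w, w beta^((d-1)/2)) = z.  The gamma-cycle of L(w, w beta^((d-1)/2)) only
   depends on the beta-cycle of w, so the beta-cycles of length d map onto
   Gamma. *)

Section PermOrbits.
Variables (T : finType) (s : {perm T}).

Lemma iter_porbit_dvdn x j : (iter j s x == x) = (#|porbit s x| %| j).
Proof.
set k := #|porbit s x|.
have k_gt0 : 0 < k by rewrite lt0n card_porbit_neq0.
have iter_kq q : iter (q * k) s x = x by rewrite iterM iter_fix ?iter_porbit.
rewrite {1}(divn_eq j k) addnC iterD iter_kq /dvdn.
apply/eqP/eqP => [jk_fix|->] //.
have lt_jk : j %% k < k by rewrite ltn_mod.
have := @nth_uniq _ x _ (j %% k) 0 _ _ (uniq_traject_porbit s x).
rewrite size_traject => /(_ lt_jk k_gt0).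
by rewrite !nth_traject // jk_fix eqxx => /esym/eqP.
Qed.

Lemma porbit_card1 x : (#|porbit s x| == 1) = (s x == x).
Proof. by rewrite -dvdn1 -iter_porbit_dvdn. Qed.

Lemma porbit_iter i x : porbit s (iter i s x) = porbit s x.
Proof. by rewrite -permX porbit_perm. Qed.

Lemma porbit_sub_stable (A : {set T}) x :
  {homo s : y / y \in A} -> x \in A -> porbit s x \subset A.
Proof.
move=> sA xA; apply/subsetP => _ /porbitP [i ->].
by rewrite permX; apply: iter_in.
Qed.

Lemma card_stable_uniform_porbits (A : {set T}) m :
  {homo s : y / y \in A} -> {in A, forall x, #|porbit s x| = m} ->
  #|A| = #|porbit s @: A| * m.
Proof.
move=> sA Am; apply: card_uniform_partition => [_ /imsetP [x xA ->]|].
  exact: Am.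
apply/and3P; split.
- apply/eqP/setP => y; apply/bigcupP/idP => [[_ /imsetP [x xA ->]]|yA].
    by apply/subsetP: y; apply: porbit_sub_stable.
  by exists (porbit s y); [apply: imset_f | apply: porbit_id].
- apply/trivIsetP => _ _ /imsetP [x _ ->] /imsetP [x' _ ->] ne.
  apply/pred0P => y /=; apply/negbTE/andP => -[].
  by rewrite -!eq_porbit_mem => /eqP yx /eqP yx'; rewrite -yx -yx' eqxx in ne.
- apply/imsetP => -[x _ /esym x_empty].
  by have := porbit_id s x; rewrite x_empty inE.
Qed.

Lemma card_porbit_double x l :
  (forall j, (iter j.*2 s x == x) = (l %| j)) -> iter l s x != x ->
  #|porbit s x| = l.*2.
Proof.
move=> fix2 not_fix; set m := #|porbit s x|.
have m_2l : m %| l.*2 by rewrite -iter_porbit_dvdn fix2.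
have m_even : ~~ odd m.
  apply: contra not_fix => m_odd; rewrite iter_porbit_dvdn.
  by rewrite -(@Gauss_dvdr m 2 l) ?coprimen2 // mul2n.
have m2E : m = (m./2).*2 by rewrite -{1}(odd_double_half m) (negbTE m_even).
apply/eqP; rewrite eqn_dvd m_2l /=.
have : iter m s x == x by rewrite iter_porbit_dvdn.
by rewrite m2E fix2 -!muln2 dvdn_pmul2r.
Qed.

Lemma invariant_porbit_imset_card (rT : finType) (f : T -> rT) (A : {set T}) :
  f =1 f \o s -> #|f @: A| <= #|porbit s @: A|.
Proof.
move=> f_s; have [->|[x0 _]] := set_0Vmem A; first by rewrite !imset0 cards0.
pose g (C : {set T}) := f (odflt x0 [pick y in C]).
apply: leq_trans (leq_imset_card g _); apply: subset_leq_card.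
apply/subsetP => _ /imsetP [x xA ->]; apply/imsetP; exists (porbit s x).
  exact: imset_f.
rewrite /g; case: pickP => [y /porbitP [i ->]|/(_ x)]; last by rewrite porbit_id.
by rewrite /= permX; elim: i => //= i ->; apply: f_s.
Qed.

Lemma porbits_of_card m :
  [set C in porbits s | #|C| == m] = porbit s @: [set x | #|porbit s x| == m].
Proof.
apply/setP => C; rewrite inE; apply/andP/imsetP => [[/imsetP [x _ ->] xm]|[x]].
  by exists x; rewrite ?inE.
by rewrite inE => xm ->; split; [apply: imset_f|].
Qed.

End PermOrbits.

Lemma num_cycles_lenE n (s : {perm 'I_n}) m :
  num_cycles_len s m = #|porbit s @: [set x | #|porbit s x| == m]|.
Proof. by rewrite /num_cycles_len /cycles porbits_of_card. Qed.

Lemma card_points_in_cycles_len n (s : {perm 'I_n}) m :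
  #|[set x | #|porbit s x| == m]| = num_cycles_len s m * m.
Proof.
rewrite num_cycles_lenE; apply: card_stable_uniform_porbits => [y|x].
  by rewrite !inE -(porbit_iter s 1).
by rewrite inE => /eqP.
Qed.

Lemma lcmn_eq_mulP a c l : 0 < a -> 0 < c ->
  lcmn a c = c * l <-> (forall j, (a %| c * j) = (l %| j)).
Proof.
move=> a_gt0 c_gt0; have c_cj j : c %| c * j by apply: dvdn_mulr.
split => [acE j|aP].
  by rewrite -[l %| j](dvdn_pmul2l c_gt0) -acE dvdn_lcm c_cj andbT.
have c_lcm : c %| lcmn a c by apply: dvdn_lcmr.
have lcmE : lcmn a c = c * (lcmn a c %/ c) by rewrite mulnC divnK.
apply/eqP; rewrite eqn_dvd dvdn_lcm aP dvdnn c_cj /= lcmE dvdn_pmul2l //.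
by rewrite -aP -lcmE dvdn_lcml.
Qed.

Lemma autoparatopism12_rel n (alpha beta gamma : {perm 'I_n}) L :
  autoparatopism12 alpha beta gamma L ->
  forall x y, L (beta y) (alpha x) = gamma (L x y).
Proof.
move=> autL x y.
have : ((beta y, alpha x), gamma (L x y)) \in paratop12_image alpha beta gamma L.
  by apply/imsetP; exists ((x, y), L x y); rewrite ?inE.
by rewrite autL inE => /eqP.
Qed.

Section AutoparatopismCycles.
Variables (n : nat) (beta gamma : {perm 'I_n}) (L : 'I_n -> 'I_n -> 'I_n).
Hypothesis L_row : forall x, injective (L x).
Hypothesis L_col : forall y, injective (fun x => L x y).
Hypothesis L_beta : forall x y, L (beta y) x = gamma (L x y).

Lemma L_iter_double m x y :
  L (iter m beta x) (iter m beta y) = iter m.*2 gamma (L x y).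
Proof. by elim: m => // m IHm; rewrite doubleS /= !L_beta IHm. Qed.

Lemma L_iter_double_succ m x y :
  L (iter m.+1 beta y) (iter m beta x) = iter m.*2.+1 gamma (L x y).
Proof. by rewrite /= L_beta L_iter_double. Qed.

Section OddGammaCycle.
Variable z : 'I_n.
Let c := #|porbit gamma z|.
Hypothesis c_odd : odd c.

Let k := c./2.
Let c_half : k.*2.+1 = c.
Proof. by rewrite -[RHS]odd_double_half c_odd add1n. Qed.

Let c_gt0 : 0 < c.
Proof. by rewrite lt0n card_porbit_neq0. Qed.

Let zcol x := invF (@L_row x) z.

Let zcolP x : L x (zcol x) = z.
Proof. exact: f_invF. Qed.

Let zcol_eq x y : L x y = z -> zcol x = y.
Proof. by move=> Lxy; apply: (@L_row x); rewrite zcolP. Qed.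

Let zcol_inj : injective zcol.
Proof.
by move=> x x' eq_col; apply: (@L_col (zcol x)) => /=; rewrite zcolP eq_col zcolP.
Qed.

Let zcol_iter_c i x : zcol (iter (c * i) beta x) = iter (c * i) beta (zcol x).
Proof.
apply: zcol_eq; rewrite L_iter_double zcolP; apply/eqP.
by rewrite iter_porbit_dvdn -muln2 -mulnA dvdn_mulr.
Qed.

Let zcol_twist x : zcol (iter k.+1 beta (zcol x)) = iter k beta x.
Proof. by apply: zcol_eq; rewrite L_iter_double_succ zcolP c_half iter_porbit. Qed.

Let tau : {perm 'I_n} := perm zcol_inj * beta ^+ k.+1.

Let tauE x : tau x = iter k.+1 beta (zcol x).
Proof. by rewrite permM permE permX. Qed.

Let tau_iter_c i x : tau (iter (c * i) beta x) = iter (c * i) beta (tau x).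
Proof. by rewrite !tauE zcol_iter_c -!iterD addnC. Qed.

Let iter_tau_double j x : iter j.*2 tau x = iter (c * j) beta x.
Proof.
elim: j => [|j IHj]; first by rewrite muln0.
by rewrite doubleS /= IHj !tauE zcol_twist -!iterD mulnS addSn addnn c_half.
Qed.

Variable d : nat.
Hypothesis d_gt1 : 1 < d.
Hypothesis c_dvd_d : c %| d.

Let l := d %/ c.
Let c_l : c * l = d.
Proof. by rewrite mulnC divnK. Qed.
Let l_gt0 : 0 < l.
Proof. by rewrite -(ltn_pmul2l c_gt0) muln0 c_l ltnW. Qed.

Let A := [set x | lcmn #|porbit beta x| c == d].

Let mem_A_iter x : x \in A <-> forall j, (iter (c * j) beta x == x) = (l %| j).
Proof.
have a_gt0 : 0 < #|porbit beta x| by rewrite lt0n card_porbit_neq0.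
rewrite inE -c_l; split => [/eqP /(lcmn_eq_mulP l a_gt0 c_gt0) aP j|xP].
  by rewrite iter_porbit_dvdn aP.
by apply/eqP/(lcmn_eq_mulP l a_gt0 c_gt0) => j; rewrite -iter_porbit_dvdn xP.
Qed.

Let tau_stable_A : {homo tau : x / x \in A}.
Proof.
move=> x /mem_A_iter xP; apply/mem_A_iter => j.
by rewrite -tau_iter_c (inj_eq perm_inj) xP.
Qed.

Let mem_A_of_card x : #|porbit beta x| = d -> x \in A.
Proof.
move=> xd; rewrite inE xd eqn_dvd.
by rewrite dvdn_lcm dvdnn c_dvd_d dvdn_lcml.
Qed.

Hypothesis no_lcm_cycle :
  ~~ [exists C' in cycles beta, (1 < #|C'| < d) && (lcmn c #|C'| == d)].

Let mem_A_cases x :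
  x \in A -> #|porbit beta x| = d \/ #|porbit beta x| = 1 /\ c = d.
Proof.
rewrite inE => /eqP lcm_d; set a := #|porbit beta x| in lcm_d *.
have a_gt0 : 0 < a by rewrite lt0n card_porbit_neq0.
have a_le_d : a <= d by rewrite dvdn_leq ?(ltnW d_gt1) // -lcm_d dvdn_lcml.
have [a1|a_gt1] := eqVneq a 1; first by right; rewrite -lcm_d a1 lcm1n.
have [a_lt_d|] := ltnP a d; last by left; apply/eqP; rewrite eqn_leq a_le_d.
case/negP: no_lcm_cycle; apply/exists_inP; exists (porbit beta x).
  exact: imset_f.
by rewrite a_lt_d lcmnC lcm_d eqxx andbT ltn_neqAle eq_sym a_gt1 a_gt0.
Qed.

Hypothesis fixed_odd_c_lt_d : odd (num_fixed beta) ==> (c < d).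
Hypothesis cycles_d_odd : odd (num_cycles_len beta d).

Let A_card_not_dvd : ~~ (l.*2 %| #|A|).
Proof.
pose Ad := [set x | #|porbit beta x| == d]; pose Fx := [set x | beta x == x].
have [c_lt_d|c_gt_d|c_d] := ltngtP c d.
- have -> : A = Ad.
    apply/setP => x; rewrite [RHS]inE.
    apply/idP/eqP => [/mem_A_cases|/mem_A_of_card //].
    by case=> [//|[_ c_d]]; rewrite c_d ltnn in c_lt_d.
  rewrite card_points_in_cycles_len; move: cycles_d_odd; set r := num_cycles_len _ _.
  rewrite -c_l mulnA -muln2 mulnC dvdn_pmul2r // => r_odd.
  by rewrite dvdn2 oddM r_odd c_odd.
- by rewrite ltnNge dvdn_leq ?(ltnW d_gt1) in c_gt_d.
have l1 : l = 1 by rewrite /l -c_d divnn c_gt0.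
have -> : A = Ad :|: Fx.
  apply/setP => x; rewrite in_setU [x \in Ad]inE [x \in Fx]inE -porbit_card1.
  apply/idP/orP => [/mem_A_cases [->|[-> _]]|[/eqP/mem_A_of_card //|/eqP x1]].
  - by left.
  - by right.
  - by rewrite inE x1 lcm1n c_d.
have Ad_Fx0 : Ad :&: Fx = set0.
  apply/setP => x; rewrite !inE -porbit_card1; apply/negbTE/andP => -[/eqP -> d1].
  by move: d_gt1; rewrite (eqP d1).
rewrite l1 cardsU Ad_Fx0 cards0 subn0 card_points_in_cycles_len.
have Fx_even : ~~ odd #|Fx|.
  by apply: contraL fixed_odd_c_lt_d => Fx_odd; rewrite /num_fixed Fx_odd c_d ltnn.
by rewrite dvdn2 oddD oddM cycles_d_odd -c_d c_odd (negbTE Fx_even).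
Qed.

Let exists_A_tau_fixed : exists2 x, x \in A & iter l tau x = x.
Proof.
have [/exists_inP [x xA /eqP]|] := boolP [exists x in A, iter l tau x == x].
  by exists x.
rewrite negb_exists_in => /forall_inP not_fixed.
suff: l.*2 %| #|A| by rewrite (negbTE A_card_not_dvd).
rewrite (@card_stable_uniform_porbits _ tau _ l.*2) ?dvdn_mull // => x xA.
apply: card_porbit_double (not_fixed x xA) => j.
by rewrite iter_tau_double; apply: (mem_A_iter x).1.
Qed.

Lemma Gamma_cycle_odd_len : odd d.
Proof.
apply: contraT => d_even; case: exists_A_tau_fixed => x /mem_A_iter xP.
have l_even : ~~ odd l by move: d_even; rewrite -c_l oddM c_odd.
have lE : l = (l./2).*2 by rewrite -{1}(odd_double_half l) (negbTE l_even).
rewrite lE iter_tau_double => /eqP; rewrite xP => /dvdn_leq.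
by rewrite lE -addnn; lia.
Qed.

Lemma Gamma_cycle_witness :
  exists2 w, #|porbit beta w| = d & L w (iter d./2 beta w) = z.
Proof.
case: exists_A_tau_fixed => x xA tau_l_x.
have l_odd : odd l by move: Gamma_cycle_odd_len; rewrite -c_l oddM => /andP [].
set h := l./2; have lE : l = h.*2.+1 by rewrite -(odd_double_half l) l_odd.
set w := iter (c * h) beta x.
have tau_w : tau w = x by rewrite -[RHS]tau_l_x lE /= iter_tau_double.
have wA : w \in A by move: xA; rewrite !inE /w porbit_iter.
have w_cl : iter (c * l) beta w = w by apply/eqP; rewrite ((mem_A_iter w).1 wA l).
have half_d : d./2 = c * h + k.
  by rewrite -c_l lE -c_half -addnn; lia.
have zcol_w : zcol w = iter d./2 beta w.
  rewrite -{1}w_cl zcol_iter_c (_ : c * l = c * h + k + c * h + k.+1).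
    by rewrite iterD -tauE tau_w -iterD half_d.
  by rewrite lE -c_half -addnn; lia.
exists w; last by rewrite -zcol_w zcolP.
have [//|[/eqP w_fixed c_d]] := mem_A_cases wA.
rewrite porbit_card1 in w_fixed.
have Lww : L w w = z by rewrite -{2}(iter_fix d./2 (eqP w_fixed)) -zcol_w zcolP.
have c1 : c == 1 by rewrite porbit_card1 -{1}Lww -L_beta (eqP w_fixed) Lww.
by move: d_gt1; rewrite -c_d (eqP c1).
Qed.

End OddGammaCycle.

Lemma porbit_L_iter_beta m w :
  porbit gamma (L (beta w) (iter m beta (beta w))) =
  porbit gamma (L w (iter m beta w)).
Proof. by rewrite -iterSr (L_iter_double 1 w (iter m beta w)) porbit_iter. Qed.

Lemma Gamma_set_witness d C :
  1 < d -> odd (num_cycles_len beta d) -> C \in Gamma_set beta gamma d ->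
  odd d /\ exists2 w, w \in [set x | #|porbit beta x| == d] &
                      C = porbit gamma (L w (iter d./2 beta w)).
Proof.
move=> d_gt1 r_odd; rewrite inE => /andP [/imsetP [z _ ->]].
case/and4P => c_odd c_dvd_d no_lcm fixed_odd.
split; first exact: (Gamma_cycle_odd_len c_odd d_gt1 c_dvd_d no_lcm fixed_odd r_odd).
have [w wd Lw] := Gamma_cycle_witness c_odd d_gt1 c_dvd_d no_lcm fixed_odd r_odd.
by exists w; rewrite ?inE ?wd ?Lw.
Qed.

End AutoparatopismCycles.

Theorem theorem4p5 (n : nat) (beta gamma : {perm 'I_n}) (d : nat) :
  in_Par12 1 beta gamma ->
  1 < d ->
  odd (num_cycles_len beta d) ->
  (~~ odd d -> Gamma_set beta gamma d = set0) /\
  (odd d -> #|Gamma_set beta gamma d| <= num_cycles_len beta d).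
Proof.
case=> L [[L_row L_col] autL] d_gt1 r_odd.
have L_beta x y : L (beta y) x = gamma (L x y).
  by have := autoparatopism12_rel autL x y; rewrite perm1.
have witness := Gamma_set_witness L_row L_col L_beta d_gt1 r_odd.
split => [d_even | _].
  by apply/setP => C; rewrite in_set0; apply: contraNF d_even => /witness [].
pose f w := porbit gamma (L w (iter d./2 beta w)).
rewrite num_cycles_lenE; apply: leq_trans (invariant_porbit_imset_card (f := f) _ _).
  apply/subset_leq_card/subsetP => C /witness [_ [w wd ->]]; exact: imset_f.
by move=> w; rewrite /f /= porbit_L_iter_beta.
Qed.
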